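(* Let $V\in{}_B\mathrm{Mod}^A$ and $W\in{}_A\mathrm{Mod}^C$. Then the DK-modules ${}_V\mathrm{Ind}(W)$ and $\mathrm{Ind}^W(V)$ (both with underlying space $V\odot W$, as described in the context) are isomorphic in ${}_B\mathrm{Mod}^C$.
   Context: $A$ is a CQG Hopf $*$-algebra: a complex Hopf algebra $(A,\Delta_A,\varepsilon_A,S_A)$ with an anti-linear involution making it a $*$-algebra with $\Delta_A$ a $*$-homomorphism, admitting a state $\Phi_A$ with $(\Phi_A\otimes\mathrm{id})\Delta_A(a)=\Phi_A(a)1=(\mathrm{id}\otimes\Phi_A)\Delta_A(a)$. $B\subseteq A$ is a unital right coideal $*$-subalgebra ($\Delta_A(B)\subseteq B\odot A$). Let $B_+=B\cap\ker\varepsilon_A$, $C=A/AB_+$ with quotient map $\pi_C$; $C$ is a coalgebra with comultiplication induced by $\Delta_A$ and a left $A$-module via $a\cdot\pi_C(a')=\pi_C(aa')$. Sweedler notation is used for coproducts and coactions ($\odot$ is the algebraic tensor product). For $(X,Y)\in\{(B,A),(A,C),(B,C)\}$, ${}_X\mathrm{Mod}^Y$ is the category of left $X$-modules $V$ with a right $Y$-comodule structure $v\mapsto v_{(0)}\otimes v_{(1)}$ such that $(xv)_{(0)}\otimes(xv)_{(1)}=x_{(1)}v_{(0)}\otimes x_{(2)}v_{(1)}$ (with $x_{(1)}\otimes x_{(2)}=\Delta_A(x)$ and $x_{(2)}v_{(1)}$ the product in $A$, resp. the $A$-action on $C$); morphisms are module and comodule maps. ${}_V\mathrm{Ind}(W)$: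 $V\odot W$ with $b(v\otimes w)=bv\otimes w$ and coaction $v\otimes w\mapsto v_{(0)}\otimes w_{(0)}\otimes v_{(1)}w_{(1)}$. $\mathrm{Ind}^W(V)$: $V\odot W$ with $b(v\otimes w)=b_{(1)}v\otimes b_{(2)}w$ and coaction $v\otimes w\mapsto v\otimes w_{(0)}\otimes w_{(1)}$. (Both are objects of ${}_B\mathrm{Mod}^C$.) *)

(* Elements of algebraic tensor products are represented
   "in Sweedler style" as finite lists of pairs (resp. triples), two lists
   being identified (teq2 / teq3) iff every bilinear (resp. trilinear) map
   into every K-vector space takes the same value on them; this is exactly
   equality of the corresponding elements of the algebraic tensor product. *)
From HB Require Import structures.
From mathcomp Require Import all_boot all_order all_algebra.
From mathcomp Require Import complex reals.
Set Implicit Arguments. Unset Strict Implicit. Unset Printing Implicit Defensive.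
Import Order.TTheory GRing.Theory Num.Theory.
Local Open Scope ring_scope.

Section Tensors.
Variable K : numClosedFieldType.

Definition bilin (U V X : lmodType K) (f : U -> V -> X) : Prop :=
  (forall (k : K) u u' v, f (k *: u + u') v = k *: f u v + f u' v) /\
  (forall (k : K) u v v', f u (k *: v + v') = k *: f u v + f u v').

Definition trilin (U V W X : lmodType K) (f : U -> V -> W -> X) : Prop :=
  (forall (k : K) u u' v w, f (k *: u + u') v w = k *: f u v w + f u' v w) /\
  (forall (k : K) u v v' w, f u (k *: v + v') w = k *: f u v w + f u v' w) /\
  (forall (k : K) u v w w', f u v (k *: w + w') = k *: f u v w + f u v w').

Definition teq2 (U V : lmodType K) (s t : seq (U * V)) : Prop :=
  forall (X : lmodType K) (f : U -> V -> X), bilin f ->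
    \sum_(p <- s) f p.1 p.2 = \sum_(p <- t) f p.1 p.2.

Definition teq3 (U V W : lmodType K) (s t : seq (U * V * W)) : Prop :=
  forall (X : lmodType K) (f : U -> V -> W -> X), trilin f ->
    \sum_(p <- s) f p.1.1 p.1.2 p.2 = \sum_(p <- t) f p.1.1 p.1.2 p.2.

Definition tscale (U V : lmodType K) (k : K) (s : seq (U * V)) : seq (U * V) :=
  [seq (k *: p.1, p.2) | p <- s].

Record is_CQG_Hopf_star (A : algType K) (Delta : A -> seq (A * A))
    (eps : A -> K) (S : A -> A) (st : A -> A) (Phi : A -> K) : Prop := {
  cop_lin : forall (k : K) x y,
    teq2 (Delta (k *: x + y)) (tscale k (Delta x) ++ Delta y);
  cop_mul : forall x y,
    teq2 (Delta (x * y)) [seq (p.1 * q.1, p.2 * q.2) | p <- Delta x, q <- Delta y];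
  cop_one : teq2 (Delta 1) [:: (1, 1)];
  cop_coass : forall a,
    teq3 [seq (p.1, q.1, q.2) | p <- Delta a, q <- Delta p.2]
         [seq (q.1, q.2, p.2) | p <- Delta a, q <- Delta p.1];
  eps_lin : forall (k : K) x y, eps (k *: x + y) = k * eps x + eps y;
  eps_mul : forall x y, eps (x * y) = eps x * eps y;
  eps_one : eps 1 = 1;
  eps_counit_l : forall a, \sum_(p <- Delta a) eps p.1 *: p.2 = a;
  eps_counit_r : forall a, \sum_(p <- Delta a) eps p.2 *: p.1 = a;
  S_lin : forall (k : K) x y, S (k *: x + y) = k *: S x + S y;
  S_antipode_l : forall a, \sum_(p <- Delta a) S p.1 * p.2 = eps a *: 1;
  S_antipode_r : forall a, \sum_(p <- Delta a) p.1 * S p.2 = eps a *: 1;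
  st_antilin : forall (k : K) x y, st (k *: x + y) = k^* *: st x + st y;
  st_mul : forall x y, st (x * y) = st y * st x;
  st_invol : forall x, st (st x) = x;
  cop_st : forall a, teq2 (Delta (st a)) [seq (st p.1, st p.2) | p <- Delta a];
  Phi_lin : forall (k : K) x y, Phi (k *: x + y) = k * Phi x + Phi y;
  Phi_one : Phi 1 = 1;
  Phi_pos : forall a, 0 <= Phi (st a * a);
  Phi_inv_l : forall a, \sum_(p <- Delta a) Phi p.1 *: p.2 = Phi a *: 1;
  Phi_inv_r : forall a, \sum_(p <- Delta a) Phi p.2 *: p.1 = Phi a *: 1
}.

Record is_right_coideal_star_subalg (A : algType K) (Delta : A -> seq (A * A))
    (st : A -> A) (B : A -> Prop) : Prop := {
  B_one : B 1;
  B_lin : forall (k : K) x y, B x -> B y -> B (k *: x + y);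
  B_mul : forall x y, B x -> B y -> B (x * y);
  B_st : forall x, B x -> B (st x);
  B_coideal : forall b, B b ->
    exists s : seq (A * A), (forall p, p \in s -> B p.1) /\ teq2 (Delta b) s
}.

(* pi : A -> C is the quotient map A -> A / A B_+ (B_+ = B \cap ker eps),
   DeltaC, epsC are the induced coalgebra structure on C and actC the
   induced left A-action  a . pi(a') = pi(a a'). *)
Record is_quotient_coalg (A : algType K) (Delta : A -> seq (A * A))
    (eps : A -> K) (B : A -> Prop) (C : lmodType K) (pi : A -> C)
    (DeltaC : C -> seq (C * C)) (epsC : C -> K) (actC : A -> C -> C) : Prop := {
  pi_lin : forall (k : K) x y, pi (k *: x + y) = k *: pi x + pi y;
  pi_surj : forall c, exists a, pi a = c;
  pi_ker : forall x, pi x = 0 <->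
    exists s : seq (A * A), (forall p, p \in s -> B p.2 /\ eps p.2 = 0) /\
                            x = \sum_(p <- s) p.1 * p.2;
  copC_def : forall a, teq2 (DeltaC (pi a)) [seq (pi p.1, pi p.2) | p <- Delta a];
  epsC_def : forall a, epsC (pi a) = eps a;
  actC_def : forall a a', actC a (pi a') = pi (a * a')
}.

(* V is an object of  _B Mod^A  (actV is only relevant on elements of B) *)
Record is_BModA (A : algType K) (Delta : A -> seq (A * A)) (eps : A -> K)
    (B : A -> Prop) (V : lmodType K) (actV : A -> V -> V)
    (rhoV : V -> seq (V * A)) : Prop := {
  actV_linr : forall b (k : K) v v', B b -> actV b (k *: v + v') = k *: actV b v + actV b v';
  actV_linl : forall b b' (k : K) v, B b -> B b' ->
    actV (k *: b + b') v = k *: actV b v + actV b' v;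
  actV_one : forall v, actV 1 v = v;
  actV_mul : forall b b' v, B b -> B b' -> actV (b * b') v = actV b (actV b' v);
  rhoV_lin : forall (k : K) v v', teq2 (rhoV (k *: v + v')) (tscale k (rhoV v) ++ rhoV v');
  rhoV_coass : forall v,
    teq3 [seq (p.1, q.1, q.2) | p <- rhoV v, q <- Delta p.2]
         [seq (q.1, q.2, p.2) | p <- rhoV v, q <- rhoV p.1];
  rhoV_counit : forall v, \sum_(p <- rhoV v) eps p.2 *: p.1 = v;
  rhoV_compat : forall b (s : seq (A * A)), B b -> (forall p, p \in s -> B p.1) ->
    teq2 (Delta b) s -> forall v,
    teq2 (rhoV (actV b v)) [seq (actV q.1 p.1, q.2 * p.2) | q <- s, p <- rhoV v]
}.

Record is_AModC (A : algType K) (Delta : A -> seq (A * A)) (C : lmodType K)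
    (DeltaC : C -> seq (C * C)) (epsC : C -> K) (actC : A -> C -> C)
    (W : lmodType K) (actW : A -> W -> W) (rhoW : W -> seq (W * C)) : Prop := {
  actW_linr : forall a (k : K) w w', actW a (k *: w + w') = k *: actW a w + actW a w';
  actW_linl : forall a a' (k : K) w, actW (k *: a + a') w = k *: actW a w + actW a' w;
  actW_one : forall w, actW 1 w = w;
  actW_mul : forall a a' w, actW (a * a') w = actW a (actW a' w);
  rhoW_lin : forall (k : K) w w', teq2 (rhoW (k *: w + w')) (tscale k (rhoW w) ++ rhoW w');
  rhoW_coass : forall w,
    teq3 [seq (p.1, q.1, q.2) | p <- rhoW w, q <- DeltaC p.2]
         [seq (q.1, q.2, p.2) | p <- rhoW w, q <- rhoW p.1];
  rhoW_counit : forall w, \sum_(p <- rhoW w) epsC p.2 *: p.1 = w;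
  rhoW_compat : forall a w,
    teq2 (rhoW (actW a w)) [seq (actW q.1 p.1, actC q.2 p.2) | q <- Delta a, p <- rhoW w]
}.

Section Ind.
Variables (A : algType K) (C V W : lmodType K).
Variables (actV : A -> V -> V) (rhoV : V -> seq (V * A)).
Variables (actW : A -> W -> W) (rhoW : W -> seq (W * C)) (actC : A -> C -> C).

Definition indV_act (b : A) (x : seq (V * W)) : seq (V * W) :=
  [seq (actV b p.1, p.2) | p <- x].
Definition indV_coact (x : seq (V * W)) : seq (V * W * C) :=
  flatten [seq [seq (q.1, r.1, actC q.2 r.2) | q <- rhoV p.1, r <- rhoW p.2] | p <- x].

(* Ind^W(V) : b (v (x) w) = b_(1) v (x) b_(2) w, where sb is any
   representation of Delta(b) in B (.) A;
   coaction v (x) w |-> v (x) w_(0) (x) w_(1) *)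
Definition indW_act (sb : seq (A * A)) (x : seq (V * W)) : seq (V * W) :=
  [seq (actV q.1 p.1, actW q.2 p.2) | p <- x, q <- sb].
Definition indW_coact (x : seq (V * W)) : seq (V * W * C) :=
  [seq (p.1, r.1, r.2) | p <- x, r <- rhoW p.2].
End Ind.

Definition tensor_linear (V W : lmodType K) (F : seq (V * W) -> seq (V * W)) : Prop :=
  (forall s t, teq2 s t -> teq2 (F s) (F t)) /\
  (forall (k : K) s t, teq2 (F (tscale k s ++ t)) (tscale k (F s) ++ F t)).

Definition tmap_idC (V W C : lmodType K) (F : seq (V * W) -> seq (V * W))
    (l : seq (V * W * C)) : seq (V * W * C) :=
  [seq (q.1, q.2, t.2) | t <- l, q <- F [:: t.1]].

Definition Ind_isomorphic (A : algType K) (Delta : A -> seq (A * A))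
    (B : A -> Prop) (C V W : lmodType K) (actC : A -> C -> C)
    (actV : A -> V -> V) (rhoV : V -> seq (V * A))
    (actW : A -> W -> W) (rhoW : W -> seq (W * C)) : Prop :=
  exists (F G : seq (V * W) -> seq (V * W)),
    [/\ tensor_linear F, tensor_linear G,
        ((forall x, teq2 (G (F x)) x) /\ (forall x, teq2 (F (G x)) x)),
        (forall b (sb : seq (A * A)), B b -> (forall p, p \in sb -> B p.1) ->
           teq2 (Delta b) sb -> forall x,
           teq2 (F (indV_act actV b x)) (indW_act actV actW sb (F x))) &
        (forall x, teq3 (tmap_idC F (indV_coact rhoV rhoW actC x))
                        (indW_coact rhoW (F x)))].

End Tensors.

(* The isomorphism is F (v (x) w) = v_(0) (x) v_(1) w, with inverse
   v (x) w |-> v_(0) (x) S(v_(1)) w.  By coassociativity of the coaction of V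
   the two composites are v_(0) (x) S(v_(1)) v_(2) w and
   v_(0) (x) v_(1) S(v_(2)) w, which collapse to v (x) w by the antipode and
   counit axioms.  F is B-linear because (b v)_(0) (x) (b v)_(1) =
   b_(1) v_(0) (x) b_(2) v_(1), and C-colinear because (a w)_(0) (x) (a w)_(1) =
   a_(1) w_(0) (x) a_(2) w_(1), so both sides send v (x) w to
   v_(0) (x) v_(1) w_(0) (x) v_(2) w_(1).
   Tensors are lists of pairs compared through all bilinear maps, so a map
   given on pure tensors is well defined as soon as it pulls bilinear maps
   back to bilinear maps. *)

From HB Require Import structures.
From mathcomp Require Import all_boot all_order all_algebra.
From mathcomp Require Import complex reals.
Set Implicit Arguments. Unset Strict Implicit. Unset Printing Implicit Defensive.
Import Order.TTheory GRing.Theory Num.Theory.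
Local Open Scope ring_scope.

Section MultilinearAlgebra.
Variable K : numClosedFieldType.

Section LinearMap.
Variables (U X : lmodType K) (h : U -> X).
Hypothesis h_lin : linear h.

Lemma linear_mapD : {morph h : u v / u + v}.
Proof. by move=> u v; have := h_lin 1 u v; rewrite !scale1r. Qed.

Lemma linear_map0 : h 0 = 0.
Proof. by apply: (addIr (h 0)); rewrite -linear_mapD !add0r. Qed.

Lemma linear_mapZ k u : h (k *: u) = k *: h u.
Proof. exact: scalable_linear. Qed.

Lemma linear_map_sum (I : Type) (s : seq I) (F : I -> U) :
  h (\sum_(i <- s) F i) = \sum_(i <- s) h (F i).
Proof. exact: (big_morph h linear_mapD linear_map0). Qed.
End LinearMap.

Lemma linear_compose (U Y X : lmodType K) (g : U -> Y) (h : Y -> X) :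
  linear g -> linear h -> linear (fun u => h (g u)).
Proof. by move=> g_lin h_lin k u u'; rewrite g_lin h_lin. Qed.

Lemma linear_big (U X : lmodType K) (I : Type) (s : seq I) (h : I -> U -> X) :
  (forall i, linear (h i)) -> linear (fun u => \sum_(i <- s) h i u).
Proof.
move=> h_lin k u u'; rewrite scaler_sumr -big_split /=.
by apply: eq_bigr => i _; rewrite h_lin.
Qed.

Section Bilinear.
Variables (U V X : lmodType K) (f : U -> V -> X).

Lemma bilinP : (forall v, linear (f^~ v)) -> (forall u, linear (f u)) -> bilin f.
Proof. by move=> fl fr; split=> k *; [exact: fl | exact: fr]. Qed.

Hypothesis f_bilin : bilin f.

Lemma bilin_linl v : linear (f^~ v).
Proof. by move=> k u u'; case: f_bilin. Qed.

Lemma bilin_linr u : linear (f u).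
Proof. by move=> k v v'; case: f_bilin. Qed.
End Bilinear.

Section Trilinear.
Variables (U V W X : lmodType K) (g : U -> V -> W -> X).

Lemma trilinP : (forall v w, linear (fun u => g u v w)) ->
  (forall u w, linear (fun v => g u v w)) -> (forall u v, linear (g u v)) ->
  trilin g.
Proof.
by move=> g1 g2 g3; split; [|split] => k *; [exact: g1 | exact: g2 | exact: g3].
Qed.

Hypothesis g_trilin : trilin g.

Lemma trilin_lin1 v w : linear (fun u => g u v w).
Proof. by move=> k u u'; case: g_trilin. Qed.

Lemma trilin_lin2 u w : linear (fun v => g u v w).
Proof. by move=> k v v'; case: g_trilin => _ []. Qed.

Lemma trilin_lin3 u v : linear (g u v).
Proof. by move=> k w w'; case: g_trilin => _ []. Qed.
End Trilinear.

Definition tsum (U V X : lmodType K) (f : U -> V -> X) (s : seq (U * V)) : X :=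
  \sum_(p <- s) f p.1 p.2.

Lemma tsum_tscale_cat (U V X : lmodType K) (f : U -> V -> X) k s t :
  bilin f -> tsum f (tscale k s ++ t) = k *: tsum f s + tsum f t.
Proof.
move=> f_bilin; rewrite /tsum big_cat big_map scaler_sumr; congr (_ + _).
by apply: eq_bigr => p _; rewrite (linear_mapZ (bilin_linl f_bilin _)).
Qed.

Lemma linear_tsum_comp (U Y X : lmodType K) (rho : U -> seq (U * Y)) (g : U -> Y -> X) :
  (forall k u u', teq2 (rho (k *: u + u')) (tscale k (rho u) ++ rho u')) ->
  bilin g -> linear (fun u => tsum g (rho u)).
Proof.
move=> rho_lin g_bilin k u u'.
by rewrite /tsum (rho_lin _ _ _ _ _ g_bilin) -/(tsum _ _) tsum_tscale_cat.
Qed.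

Section TensorMap.
Variables (U V : lmodType K).

Definition tmap (phi : U -> V -> seq (U * V)) (x : seq (U * V)) : seq (U * V) :=
  [seq q | p <- x, q <- phi p.1 p.2].

Lemma tsum_tmap (X : lmodType K) phi (f : U -> V -> X) x :
  tsum f (tmap phi x) = tsum (fun u v => tsum f (phi u v)) x.
Proof. by rewrite /tsum big_allpairs_dep. Qed.

Lemma tensor_linear_tmap (phi : U -> V -> seq (U * V)) :
  (forall (X : lmodType K) (f : U -> V -> X), bilin f ->
     bilin (fun u v => tsum f (phi u v))) ->
  tensor_linear (tmap phi).
Proof.
move=> phi_bilin; split=> [s t st X f f_bilin | k s t X f f_bilin].
  by have := st X _ (phi_bilin X f f_bilin); rewrite -!/(tsum _ _) !tsum_tmap.
by rewrite -!/(tsum _ _) !tsum_tmap !tsum_tscale_cat ?tsum_tmap //; exact: phi_bilin.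
Qed.

Lemma tmapK (phi psi : U -> V -> seq (U * V)) :
  (forall (X : lmodType K) (f : U -> V -> X), bilin f ->
     forall u v, tsum (fun u' v' => tsum f (psi u' v')) (phi u v) = f u v) ->
  forall x, teq2 (tmap psi (tmap phi x)) x.
Proof.
move=> psiK x X f f_bilin; rewrite -!/(tsum _ _) !tsum_tmap.
by apply: eq_bigr => p _; exact: psiK.
Qed.
End TensorMap.

End MultilinearAlgebra.

Section TwistIsomorphism.
Variables (K : numClosedFieldType) (A : algType K) (Delta : A -> seq (A * A))
  (eps : A -> K) (S st : A -> A) (Phi : A -> K).
Hypothesis hA : is_CQG_Hopf_star Delta eps S st Phi.
Variables (B : A -> Prop) (C : lmodType K) (piC : A -> C) (DeltaC : C -> seq (C * C))
  (epsC : C -> K) (actC : A -> C -> C).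
Hypothesis hC : is_quotient_coalg Delta eps B piC DeltaC epsC actC.
Variables (V : lmodType K) (actV : A -> V -> V) (rhoV : V -> seq (V * A)).
Hypothesis hV : is_BModA Delta eps B actV rhoV.
Variables (W : lmodType K) (actW : A -> W -> W) (rhoW : W -> seq (W * C)).
Hypothesis hW : is_AModC Delta DeltaC epsC actC actW rhoW.

Lemma antipode_linear : linear S.
Proof. by move=> k a a'; exact: (S_lin hA). Qed.

Lemma mulr_linearl (b : A) : linear (fun a : A => a * b).
Proof. by move=> k a a'; rewrite mulrDl scalerAl. Qed.

Lemma mulr_linearr (b : A) : linear (fun a : A => b * a).
Proof. by move=> k a a'; rewrite mulrDr scalerAr. Qed.

Lemma actC_linearl c : linear (actC^~ c).
Proof.
move=> k a a'; have [a0 <-] := pi_surj hC c.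
by rewrite !(actC_def hC) mulrDl -scalerAl (pi_lin hC).
Qed.

Lemma actW_linearl w : linear (actW^~ w).
Proof. by move=> k a a'; exact: (actW_linl hW). Qed.

Lemma actW_linearr a : linear (actW a).
Proof. by move=> k w w'; exact: (actW_linr hW). Qed.

Lemma rhoV_coass_sum (X : lmodType K) (g : V -> A -> A -> X) v : trilin g ->
  \sum_(p <- rhoV v) \sum_(q <- rhoV p.1) g q.1 q.2 p.2 =
  \sum_(p <- rhoV v) \sum_(q <- Delta p.2) g p.1 q.1 q.2.
Proof. by move=> g_trilin; have := rhoV_coass hV v g_trilin; rewrite !big_allpairs_dep. Qed.

Definition twist (sigma : A -> A) (v : V) (w : W) : seq (V * W) :=
  [seq (q.1, actW (sigma q.2) w) | q <- rhoV v].

Lemma tsum_twist (X : lmodType K) (f : V -> W -> X) sigma v w :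
  tsum f (twist sigma v w) = \sum_(q <- rhoV v) f q.1 (actW (sigma q.2) w).
Proof. by rewrite /tsum big_map. Qed.

Lemma bilin_tsum_twist (X : lmodType K) (f : V -> W -> X) sigma :
  linear sigma -> bilin f -> bilin (fun v w => tsum f (twist sigma v w)).
Proof.
move=> sigma_lin f_bilin; apply: bilinP => [w | v].
  have g_bilin : bilin (fun v a => f v (actW (sigma a) w)).
    apply: bilinP => [a | v]; first exact: bilin_linl.
    exact: linear_compose sigma_lin
             (linear_compose (actW_linearl w) (bilin_linr f_bilin v)).
  by move=> k v v'; rewrite !tsum_twist; exact: (linear_tsum_comp (rhoV_lin hV) g_bilin).
move=> k w w'; rewrite !tsum_twist.
apply: (linear_big (rhoV v) (h := fun q w => f q.1 (actW (sigma q.2) w))) => q.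
exact: linear_compose (actW_linearr _) (bilin_linr f_bilin _).
Qed.

Lemma twist_twist (X : lmodType K) (f : V -> W -> X) sigma tau v w :
  linear sigma -> linear tau -> bilin f ->
  tsum (fun u v => tsum f (twist tau u v)) (twist sigma v w) =
  \sum_(p <- rhoV v) \sum_(q <- Delta p.2) f p.1 (actW (tau q.1 * sigma q.2) w).
Proof.
move=> sigma_lin tau_lin f_bilin.
have g_trilin : trilin (fun v a b => f v (actW (tau a * sigma b) w)).
  have f_actW u := linear_compose (actW_linearl w) (bilin_linr f_bilin u).
  apply: trilinP => [a b | u b | u a]; first exact: bilin_linl.
    exact: linear_compose tau_lin (linear_compose (mulr_linearl (sigma b)) (f_actW u)).
  exact: linear_compose sigma_lin (linear_compose (mulr_linearr (tau a)) (f_actW u)).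
rewrite -(rhoV_coass_sum v g_trilin) tsum_twist; apply: eq_bigr => p _.
by rewrite tsum_twist; apply: eq_bigr => q _; rewrite (actW_mul hW).
Qed.

Lemma twistK (X : lmodType K) (f : V -> W -> X) sigma tau v w :
  linear sigma -> linear tau ->
  (forall a, \sum_(q <- Delta a) tau q.1 * sigma q.2 = eps a *: 1) ->
  bilin f -> tsum (fun u v => tsum f (twist tau u v)) (twist sigma v w) = f v w.
Proof.
move=> sigma_lin tau_lin antipode f_bilin; rewrite twist_twist //.
rewrite -[in RHS](rhoV_counit hV v) (linear_map_sum (bilin_linl f_bilin w)).
apply: eq_bigr => p _ /=.
rewrite -(linear_map_sum (bilin_linr f_bilin _)).
rewrite -(linear_map_sum (actW_linearl w)) antipode.
rewrite (linear_mapZ (actW_linearl w)) (actW_one hW).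
by rewrite (linear_mapZ (bilin_linr f_bilin _)) (linear_mapZ (bilin_linl f_bilin _)).
Qed.

Lemma twist_actV b sb (X : lmodType K) (f : V -> W -> X) v w :
  B b -> (forall p, p \in sb -> B p.1) -> teq2 (Delta b) sb -> bilin f ->
  tsum f (twist id (actV b v) w) =
  \sum_(p <- twist id v w) \sum_(q <- sb) f (actV q.1 p.1) (actW q.2 p.2).
Proof.
move=> Bb Bsb Db f_bilin.
have g_bilin : bilin (fun v a => f v (actW a w)).
  apply: bilinP => [a | u]; first exact: bilin_linl.
  exact: linear_compose (actW_linearl w) (bilin_linr f_bilin u).
rewrite tsum_twist (rhoV_compat hV Bb Bsb Db v g_bilin) big_allpairs_dep big_map.
rewrite exchange_big; apply: eq_bigr => p _; apply: eq_bigr => q _ /=.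
by rewrite (actW_mul hW).
Qed.

Lemma twist_indV_act b sb x : B b -> (forall p, p \in sb -> B p.1) -> teq2 (Delta b) sb ->
  teq2 (tmap (twist id) (indV_act actV b x)) (indW_act actV actW sb (tmap (twist id) x)).
Proof.
move=> Bb Bsb Db X f f_bilin; rewrite -!/(tsum _ _) tsum_tmap.
have -> : tsum f (indW_act actV actW sb (tmap (twist id) x)) =
    tsum (fun v w => \sum_(q <- sb) f (actV q.1 v) (actW q.2 w)) (tmap (twist id) x).
  by rewrite /tsum big_allpairs_dep.
rewrite tsum_tmap /tsum big_map; apply: eq_bigr => p _.
exact: twist_actV.
Qed.

Lemma twist_coact (X : lmodType K) (g : V -> W -> C -> X) v w : trilin g ->
  \sum_(p <- rhoV v) \sum_(r <- rhoW w)
     tsum (fun v' w' => g v' w' (actC p.2 r.2)) (twist id p.1 r.1) =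
  tsum (fun v' w' => \sum_(r <- rhoW w') g v' r.1 r.2) (twist id v w).
Proof.
move=> g_trilin; rewrite [RHS]tsum_twist.
have h_trilin r : trilin (fun v a b => g v (actW a r.1) (actC b r.2)).
  apply: trilinP => [a b | u b | u a]; first exact: trilin_lin1.
    exact: linear_compose (actW_linearl _) (trilin_lin2 g_trilin _ _).
  exact: linear_compose (actC_linearl _) (trilin_lin3 g_trilin _ _).
transitivity (\sum_(r <- rhoW w) \sum_(p <- rhoV v) \sum_(q <- Delta p.2)
                g p.1 (actW q.1 r.1) (actC q.2 r.2)).
  rewrite exchange_big; apply: eq_bigr => r _.
  rewrite -(rhoV_coass_sum v (h_trilin r)); apply: eq_bigr => p _.
  by rewrite tsum_twist.
rewrite exchange_big; apply: eq_bigr => p _ /=.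
have gp_bilin : bilin (g p.1).
  by apply: bilinP => a; [exact: trilin_lin2 | exact: trilin_lin3].
by rewrite (rhoW_compat hW p.2 w gp_bilin) big_allpairs_dep exchange_big.
Qed.

Lemma twist_indV_coact x :
  teq3 (tmap_idC (tmap (twist id)) (indV_coact rhoV rhoW actC x))
       (indW_coact rhoW (tmap (twist id) x)).
Proof.
move=> X g g_trilin.
have -> : \sum_(t <- indW_coact rhoW (tmap (twist id) x)) g t.1.1 t.1.2 t.2 =
    tsum (fun v w => \sum_(r <- rhoW w) g v r.1 r.2) (tmap (twist id) x).
  by rewrite /tsum big_allpairs_dep.
rewrite tsum_tmap big_allpairs_dep big_flatten big_map.
apply: eq_bigr => p _; rewrite -twist_coact // big_allpairs_dep.
apply: eq_bigr => q _; apply: eq_bigr => r _.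
by rewrite /tmap big_allpairs_dep big_seq1.
Qed.

End TwistIsomorphism.

Unset Implicit Arguments.

Theorem mainTheorem6 (R : realType) (A : algType R[i])
    (Delta : A -> seq (A * A)) (eps : A -> R[i]) (S st : A -> A) (Phi : A -> R[i])
    (hA : is_CQG_Hopf_star Delta eps S st Phi)
    (B : A -> Prop) (hB : is_right_coideal_star_subalg Delta st B)
    (C : lmodType R[i]) (piC : A -> C) (DeltaC : C -> seq (C * C))
    (epsC : C -> R[i]) (actC : A -> C -> C)
    (hC : is_quotient_coalg Delta eps B piC DeltaC epsC actC)
    (V : lmodType R[i]) (actV : A -> V -> V) (rhoV : V -> seq (V * A))
    (hV : is_BModA Delta eps B actV rhoV)
    (W : lmodType R[i]) (actW : A -> W -> W) (rhoW : W -> seq (W * C))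
    (hW : is_AModC Delta DeltaC epsC actC actW rhoW) :
  Ind_isomorphic Delta B actC actV rhoV actW rhoW.
Proof.
have id_linear : linear (fun a : A => a) by [].
have S_linear := antipode_linear hA.
exists (tmap (twist rhoV actW id)), (tmap (twist rhoV actW S)); split.
- by apply: tensor_linear_tmap => X f; exact: (bilin_tsum_twist hV hW id_linear).
- by apply: tensor_linear_tmap => X f; exact: (bilin_tsum_twist hV hW S_linear).
- split; apply: tmapK => X f f_bilin v w; apply: (twistK hV hW) => //.
    exact: (S_antipode_l hA).
  exact: (S_antipode_r hA).
- move=> b sb Bb Bsb Db x; exact: (twist_indV_act hV hW).
- exact: (twist_indV_coact hC hV hW).
Qed.
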